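(* The following three conjugacies hold. (1) Let $\varphi_1:\operatorname{span}_{\mathbb{R}}\{1,\mathbf{i_1},\mathbf{i_2},\mathbf{j_1}\}\to\operatorname{span}_{\mathbb{R}}\{\mathbf{i_1},\mathbf{i_2},\mathbf{j_2},\mathbf{j_3}\}$, $\varphi_1(x_1+x_2\mathbf{i_1}+x_3\mathbf{i_2}+x_4\mathbf{j_1})=x_2\mathbf{i_1}+x_3\mathbf{i_2}+x_1\mathbf{j_2}-x_4\mathbf{j_3}$. For all real $c_1,c_2,c_3$, with $c=c_1+c_2\mathbf{i_1}+c_3\mathbf{i_2}$ and $c'=\varphi_1(c)=c_2\mathbf{i_1}+c_3\mathbf{i_2}+c_1\mathbf{j_2}$, we have $\varphi_1\circ Q_{3,c}\circ\varphi_1^{-1}=Q_{3,c'}$ on the codomain of $\varphi_1$. (2) Let $\varphi_2:\operatorname{span}_{\mathbb{R}}\{1,\mathbf{i_1},\mathbf{i_2},\mathbf{j_1}\}\to\operatorname{span}_{\mathbb{R}}\{\mathbf{i_1},\mathbf{j_1},\mathbf{j_2},\mathbf{i_4}\}$, $\varphi_2(x_1+x_2\mathbf{i_1}-x_3\mathbf{i_2}+x_4\mathbf{j_1})=x_2\mathbf{i_1}+x_4\mathbf{j_1}+x_1\mathbf{j_2}-x_3\mathbf{i_4}$. For all real $c_1,c_2,c_3$, with $c=c_1+c_2\mathbf{i_1}+c_3\mathbf{j_1}$ and $c'=\varphi_2(c)=c_2\mathbf{i_1}+c_3\mathbf{j_1}+c_1\mathbf{j_2}$, we have $\varphi_2\circ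 Q_{3,c}\circ\varphi_2^{-1}=Q_{3,c'}$ on the codomain of $\varphi_2$. (3) Let $\varphi_3:\operatorname{span}_{\mathbb{R}}\{1,\mathbf{j_1},\mathbf{j_2},\mathbf{j_3}\}\to\operatorname{span}_{\mathbb{R}}\{1,\mathbf{j_1},\mathbf{j_2},\mathbf{j_3}\}$, $\varphi_3(x_1+x_2\mathbf{j_1}+x_3\mathbf{j_2}-x_4\mathbf{j_3})=-x_4+x_1\mathbf{j_1}+x_2\mathbf{j_2}+x_3\mathbf{j_3}$. For all real $c_1,c_2,c_3$, with $c=c_1+c_2\mathbf{j_1}+c_3\mathbf{j_2}$ and $c'=\varphi_3(c)=c_1\mathbf{j_1}+c_2\mathbf{j_2}+c_3\mathbf{j_3}$, we have $\varphi_3\circ Q_{3,c}\circ\varphi_3^{-1}=Q_{3,c'}$. Consequently $\mathcal{T}^3(\mathbf{i_1},\mathbf{i_2},\mathbf{j_2})=\varphi_1(\mathcal{T}^3(1,\mathbf{i_1},\mathbf{i_2}))$, $\mathcal{T}^3(\mathbf{i_1},\mathbf{j_1},\mathbf{j_2})=\varphi_2(\mathcal{T}^3(1,\mathbf{i_1},\mathbf{j_1}))$ and $\mathcal{T}^3(\mathbf{j_1},\mathbf{j_2},\mathbf{j_3})=\varphi_3(\mathcal{T}^3(1,\mathbf{j_1},\mathbf{j_2}))$; i.e. these pairs of slices have the same dynamics.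
   Context: The tricomplex numbers $\mathbb{M}(3)$ form the commutative real algebra generated by commuting units $\mathbf{i_1},\mathbf{i_2},\mathbf{i_3}$ with $\mathbf{i_k}^2=-1$; set $\mathbf{j_1}=\mathbf{i_1}\mathbf{i_2}$, $\mathbf{j_2}=\mathbf{i_1}\mathbf{i_3}$, $\mathbf{j_3}=\mathbf{i_2}\mathbf{i_3}$, $\mathbf{i_4}=\mathbf{i_1}\mathbf{i_2}\mathbf{i_3}$, with real basis $1,\mathbf{i_1},\mathbf{i_2},\mathbf{i_3},\mathbf{i_4},\mathbf{j_1},\mathbf{j_2},\mathbf{j_3}$ and Euclidean norm on coordinates. For $c\in\mathbb{M}(3)$, $Q_{3,c}(\eta)=\eta^3+c$ and $Q_{3,c}^m$ is its $m$-fold iterate. For three distinct units $u,v,w$ among $1,\mathbf{i_1},\dots,\mathbf{i_4},\mathbf{j_1},\mathbf{j_2},\mathbf{j_3}$, the 3D slice is $\mathcal{T}^3(u,v,w)=\{c\in\operatorname{span}_{\mathbb{R}}\{u,v,w\} : (Q_{3,c}^m(0))_{m\geq1}\text{ is bounded}\}$. *)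

From Stdlib Require Import Reals List.
Import ListNotations.
Open Scope R_scope.

(* An element of M(3) is given by its 8 real coordinates on the monomials
   i1^a i2^b i3^c (a,b,c in {0,1}); field tabc = coefficient of i1^a i2^b i3^c.
   So t000 ~ 1, t100 ~ i1, t010 ~ i2, t001 ~ i3, t110 ~ j1 = i1 i2,
   t101 ~ j2 = i1 i3, t011 ~ j3 = i2 i3, t111 ~ i4 = i1 i2 i3. *)
Record TC : Type := mkTC {
  t000 : R; t100 : R; t010 : R; t001 : R;
  t110 : R; t101 : R; t011 : R; t111 : R }.

Definition idx : Type := (bool * bool * bool)%type.

Definition get (x : TC) (k : idx) : R :=
  match k with
  | (false, false, false) => t000 x
  | (true,  false, false) => t100 x
  | (false, true,  false) => t010 x
  | (false, false, true ) => t001 x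
  | (true,  true,  false) => t110 x
  | (true,  false, true ) => t101 x
  | (false, true,  true ) => t011 x
  | (true,  true,  true ) => t111 x
  end.

Definition mk (f : idx -> R) : TC :=
  mkTC (f (false,false,false)) (f (true,false,false)) (f (false,true,false))
       (f (false,false,true)) (f (true,true,false)) (f (true,false,true))
       (f (false,true,true)) (f (true,true,true)).

Definition all_idx : list idx :=
  (false,false,false) :: (true,false,false) :: (false,true,false) ::
  (false,false,true) :: (true,true,false) :: (true,false,true) ::
  (false,true,true) :: (true,true,true) :: nil.

Definition ixor (a b : idx) : idx :=
  match a, b with
  | (a1,a2,a3), (b1,b2,b3) => (xorb a1 b1, xorb a2 b2, xorb a3 b3)
  end.

(* i1^a i2^b i3^c * i1^a' i2^b' i3^c' = (-1)^#{k | a_k = a'_k = 1} * monomial of the xor,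
   since the units commute and square to -1. *)
Definition bsgn (b : bool) : R := if b then -1 else 1.
Definition sgn (a b : idx) : R :=
  match a, b with
  | (a1,a2,a3), (b1,b2,b3) => bsgn (andb a1 b1) * bsgn (andb a2 b2) * bsgn (andb a3 b3)
  end.

Definition tadd (x y : TC) : TC := mk (fun k => get x k + get y k).
Definition tscale (r : R) (x : TC) : TC := mk (fun k => r * get x k).
Definition tmul (x y : TC) : TC :=
  mk (fun k => fold_right Rplus 0
        (map (fun i => sgn i (ixor i k) * get x i * get y (ixor i k)) all_idx)).

Definition tzero : TC := mk (fun _ => 0).
Definition basis (k : idx) : TC := mk (fun j => if (match j, k with
  | (a1,a2,a3), (b1,b2,b3) => andb (Bool.eqb a1 b1) (andb (Bool.eqb a2 b2) (Bool.eqb a3 b3)) end)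
  then 1 else 0).

Definition one : TC := basis (false,false,false).
Definition i1 : TC := basis (true,false,false).
Definition i2 : TC := basis (false,true,false).
Definition i3 : TC := basis (false,false,true).
Definition j1 : TC := tmul i1 i2.
Definition j2 : TC := tmul i1 i3.
Definition j3 : TC := tmul i2 i3.
Definition i4 : TC := tmul (tmul i1 i2) i3.

Definition tnorm (x : TC) : R :=
  sqrt (fold_right Rplus 0 (map (fun k => get x k * get x k) all_idx)).

Definition Q3 (c eta : TC) : TC := tadd (tmul (tmul eta eta) eta) c.
Definition Q3iter (c : TC) (m : nat) (eta : TC) : TC := Nat.iter m (Q3 c) eta.

Definition bounded_orbit (c : TC) : Prop :=
  exists M : R, forall m : nat, (1 <= m)%nat -> tnorm (Q3iter c m tzero) <= M.

Definition span3 (u v w x : TC) : Prop :=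
  exists a b d : R, x = tadd (tadd (tscale a u) (tscale b v)) (tscale d w).
Definition span4 (u v w z x : TC) : Prop :=
  exists a b d e : R,
    x = tadd (tadd (tadd (tscale a u) (tscale b v)) (tscale d w)) (tscale e z).

Definition T3 (u v w c : TC) : Prop := span3 u v w c /\ bounded_orbit c.

Definition lc4 (a : R) (u : TC) (b : R) (v : TC) (d : R) (w : TC) (e : R) (z : TC) : TC :=
  tadd (tadd (tadd (tscale a u) (tscale b v)) (tscale d w)) (tscale e z).

Definition phi1 (eta : TC) : TC :=
  let x1 := t000 eta in let x2 := t100 eta in let x3 := t010 eta in let x4 := t110 eta in
  lc4 x2 i1 x3 i2 x1 j2 (- x4) j3.

Definition phi2 (eta : TC) : TC :=
  let x1 := t000 eta in let x2 := t100 eta in let x3 := - t010 eta in let x4 := t110 eta in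
  lc4 x2 i1 x4 j1 x1 j2 (- x3) i4.

Definition phi3 (eta : TC) : TC :=
  let x1 := t000 eta in let x2 := t110 eta in let x3 := t101 eta in let x4 := - t011 eta in
  lc4 (- x4) one x1 j1 x2 j2 x3 j3.

(* phi : D -> D' is a bijection and conjugates Q_{3,c} (on D) to Q_{3,phi c} (on D'),
   i.e. phi o Q_c o phi^{-1} = Q_{c'} on D'. *)
Definition conj_bij (D D' : TC -> Prop) (phi : TC -> TC) : Prop :=
  (forall eta, D eta -> D' (phi eta)) /\
  (forall y, D' y -> exists eta, D eta /\ phi eta = y /\
                       forall eta', D eta' -> phi eta' = y -> eta' = eta).

Definition conjugates (D : TC -> Prop) (phi : TC -> TC) (c c' : TC) : Prop :=
  phi c = c' /\
  forall eta, D eta -> D (Q3 c eta) /\ phi (Q3 c eta) = Q3 c' (phi eta).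

From Stdlib Require Import Reals Lra.
Open Scope R_scope.

(* Each phi_k has the form x |-> e psi(x), where psi is a real algebra embedding
   of the 4-dimensional subalgebra spanned by the domain units into M(3) and
   e = phi_k(1) (j2, j2 and j1 respectively) satisfies e^2 = 1.  Hence
   phi_k(x^3 + c) = e^3 psi(x)^3 + phi_k(c) = phi_k(x)^3 + phi_k(c), which is the
   conjugacy; in coordinates it is a polynomial identity, checked by [ring].
   Since phi_k is moreover an isometry fixing 0 and maps the slice onto the
   other one, it carries the critical orbit (Q_c^m(0))_m onto (Q_c'^m(0))_m
   term by term with the same norms, so boundedness is preserved. *)

Lemma conj_bij_of_inverse (D D' : TC -> Prop) (phi psi : TC -> TC) :
  (forall x, D x -> D' (phi x)) -> (forall y, D' y -> D (psi y)) ->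
  (forall y, D' y -> phi (psi y) = y) -> (forall x, D x -> psi (phi x) = x) ->
  conj_bij D D' phi.
Proof.
  intros phiD psiD phiK psiK; split; [exact phiD|].
  intros y Dy; exists (psi y); split; [auto|]; split; [auto|].
  intros x Dx <-; symmetry; auto.
Qed.

Section SliceTransfer.

Variables (D : TC -> Prop) (phi : TC -> TC).
Hypotheses (D_tzero : D tzero) (phi_tzero : phi tzero = tzero)
  (tnorm_phi : forall x, D x -> tnorm (phi x) = tnorm x).

Lemma conjugates_Q3iter {c c' : TC} : conjugates D phi c c' ->
  forall m, D (Q3iter c m tzero) /\ phi (Q3iter c m tzero) = Q3iter c' m tzero.
Proof.
  intros [_ conj_step]; induction m as [|m [Dm phim]]; [auto|].
  destruct (conj_step _ Dm) as [DQ phiQ]; split; [exact DQ|].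
  exact (eq_trans phiQ (f_equal (Q3 c') phim)).
Qed.

Lemma conjugates_bounded_orbit {c c' : TC} : conjugates D phi c c' ->
  bounded_orbit c <-> bounded_orbit c'.
Proof.
  intros Hconj.
  assert (same_norm : forall m, tnorm (Q3iter c' m tzero) = tnorm (Q3iter c m tzero)).
  { intros m; destruct (conjugates_Q3iter Hconj m) as [Dm <-]; auto. }
  split; intros [M HM]; exists M; intros m Hm; specialize (HM m Hm);
    [rewrite same_norm | rewrite <- same_norm]; exact HM.
Qed.

Variables u v w u' v' w' : TC.
Hypotheses
  (conjugates_slice : forall c, span3 u v w c -> conjugates D phi c (phi c))
  (phi_span3 : forall c', span3 u' v' w' c' <-> exists c, span3 u v w c /\ phi c = c').

Lemma T3_image c' : T3 u' v' w' c' <-> exists c, T3 u v w c /\ phi c = c'.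
Proof.
  split.
  - intros [Sc' Bc']; destruct (proj1 (phi_span3 c') Sc') as (c & Sc & <-).
    exists c; repeat split; auto.
    apply (conjugates_bounded_orbit (conjugates_slice _ Sc)); exact Bc'.
  - intros (c & [Sc Bc] & <-); split.
    + apply phi_span3; eauto.
    + apply (conjugates_bounded_orbit (conjugates_slice _ Sc)); exact Bc.
Qed.

End SliceTransfer.

Lemma tmul_mkTC x0 x1 x2 x3 x4 x5 x6 x7 y0 y1 y2 y3 y4 y5 y6 y7 :
  tmul (mkTC x0 x1 x2 x3 x4 x5 x6 x7) (mkTC y0 y1 y2 y3 y4 y5 y6 y7) =
  mkTC (x0*y0 - x1*y1 - x2*y2 - x3*y3 + x4*y4 + x5*y5 + x6*y6 - x7*y7)
       (x0*y1 + x1*y0 - x2*y4 - x3*y5 - x4*y2 - x5*y3 + x6*y7 + x7*y6)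
       (x0*y2 - x1*y4 + x2*y0 - x3*y6 - x4*y1 + x5*y7 - x6*y3 + x7*y5)
       (x0*y3 - x1*y5 - x2*y6 + x3*y0 + x4*y7 - x5*y1 - x6*y2 + x7*y4)
       (x0*y4 + x1*y2 + x2*y1 - x3*y7 + x4*y0 - x5*y6 - x6*y5 - x7*y3)
       (x0*y5 + x1*y3 - x2*y7 + x3*y1 - x4*y6 + x5*y0 - x6*y4 - x7*y2)
       (x0*y6 - x1*y7 + x2*y3 + x3*y2 - x4*y5 - x5*y4 + x6*y0 - x7*y1)
       (x0*y7 + x1*y6 + x2*y5 + x3*y4 + x4*y3 + x5*y2 + x6*y1 + x7*y0).
Proof.
  cbv beta iota zeta delta [tmul mk get all_idx List.map List.fold_right sgn bsgn ixor
    xorb andb t000 t100 t010 t001 t110 t101 t011 t111].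
  f_equal; ring.
Qed.

Lemma tadd_mkTC x0 x1 x2 x3 x4 x5 x6 x7 y0 y1 y2 y3 y4 y5 y6 y7 :
  tadd (mkTC x0 x1 x2 x3 x4 x5 x6 x7) (mkTC y0 y1 y2 y3 y4 y5 y6 y7) =
  mkTC (x0+y0) (x1+y1) (x2+y2) (x3+y3) (x4+y4) (x5+y5) (x6+y6) (x7+y7).
Proof. reflexivity. Qed.

Lemma tscale_mkTC r x0 x1 x2 x3 x4 x5 x6 x7 :
  tscale r (mkTC x0 x1 x2 x3 x4 x5 x6 x7) =
  mkTC (r*x0) (r*x1) (r*x2) (r*x3) (r*x4) (r*x5) (r*x6) (r*x7).
Proof. reflexivity. Qed.

Lemma tzero_mkTC : tzero = mkTC 0 0 0 0 0 0 0 0. Proof. reflexivity. Qed.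
Lemma one_mkTC : one = mkTC 1 0 0 0 0 0 0 0. Proof. reflexivity. Qed.
Lemma i1_mkTC : i1 = mkTC 0 1 0 0 0 0 0 0. Proof. reflexivity. Qed.
Lemma i2_mkTC : i2 = mkTC 0 0 1 0 0 0 0 0. Proof. reflexivity. Qed.
Lemma i3_mkTC : i3 = mkTC 0 0 0 1 0 0 0 0. Proof. reflexivity. Qed.

Lemma j1_mkTC : j1 = mkTC 0 0 0 0 1 0 0 0.
Proof. unfold j1; rewrite i1_mkTC, i2_mkTC, tmul_mkTC; f_equal; ring. Qed.
Lemma j2_mkTC : j2 = mkTC 0 0 0 0 0 1 0 0.
Proof. unfold j2; rewrite i1_mkTC, i3_mkTC, tmul_mkTC; f_equal; ring. Qed.
Lemma j3_mkTC : j3 = mkTC 0 0 0 0 0 0 1 0.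
Proof. unfold j3; rewrite i2_mkTC, i3_mkTC, tmul_mkTC; f_equal; ring. Qed.
Lemma i4_mkTC : i4 = mkTC 0 0 0 0 0 0 0 1.
Proof. unfold i4; rewrite i1_mkTC, i2_mkTC, i3_mkTC, !tmul_mkTC; f_equal; ring. Qed.

Lemma tnorm_mkTC x0 x1 x2 x3 x4 x5 x6 x7 :
  tnorm (mkTC x0 x1 x2 x3 x4 x5 x6 x7) =
  sqrt (x0*x0 + x1*x1 + x2*x2 + x3*x3 + x4*x4 + x5*x5 + x6*x6 + x7*x7).
Proof.
  cbv beta iota zeta delta [tnorm get all_idx List.map List.fold_right
    t000 t100 t010 t001 t110 t101 t011 t111].
  f_equal; ring.
Qed.

Definition phi1_inv (y : TC) : TC := lc4 (t101 y) one (t100 y) i1 (t010 y) i2 (- t011 y) j1.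
Definition phi2_inv (y : TC) : TC := lc4 (t101 y) one (t100 y) i1 (t111 y) i2 (t110 y) j1.
Definition phi3_inv (y : TC) : TC := lc4 (t110 y) one (t101 y) j1 (t011 y) j2 (t000 y) j3.

Ltac tc_coords :=
  unfold Q3, phi1, phi2, phi3, phi1_inv, phi2_inv, phi3_inv, lc4 in *;
  rewrite ?tzero_mkTC, ?one_mkTC, ?i1_mkTC, ?i2_mkTC, ?i3_mkTC,
          ?j1_mkTC, ?j2_mkTC, ?j3_mkTC, ?i4_mkTC in *;
  repeat (rewrite ?tmul_mkTC, ?tadd_mkTC, ?tscale_mkTC in *);
  cbn [t000 t100 t010 t001 t110 t101 t011 t111] in *.

Ltac tc_destruct x :=
  destruct x as [x0 x1 x2 x3 x4 x5 x6 x7]; cbn [t000 t100 t010 t001 t110 t101 t011 t111] in *.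

Lemma span4_tzero u v w z : span4 u v w z tzero.
Proof.
  exists 0, 0, 0, 0.
  destruct u, v, w, z; rewrite tzero_mkTC, !tscale_mkTC, !tadd_mkTC; f_equal; ring.
Qed.

Lemma span4_one_i1_i2_j1_iff x :
  span4 one i1 i2 j1 x <-> t001 x = 0 /\ t101 x = 0 /\ t011 x = 0 /\ t111 x = 0.
Proof.
  tc_destruct x; split.
  - intros (a & b & d & e & H); tc_coords; injection H; lra.
  - intros (-> & -> & -> & ->); exists x0, x1, x2, x4; tc_coords; f_equal; ring.
Qed.

Lemma span4_i1_i2_j2_j3_iff x :
  span4 i1 i2 j2 j3 x <-> t000 x = 0 /\ t001 x = 0 /\ t110 x = 0 /\ t111 x = 0.
Proof.
  tc_destruct x; split.
  - intros (a & b & d & e & H); tc_coords; injection H; lra.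
  - intros (-> & -> & -> & ->); exists x1, x2, x5, x6; tc_coords; f_equal; ring.
Qed.

Lemma span4_i1_j1_j2_i4_iff x :
  span4 i1 j1 j2 i4 x <-> t000 x = 0 /\ t010 x = 0 /\ t001 x = 0 /\ t011 x = 0.
Proof.
  tc_destruct x; split.
  - intros (a & b & d & e & H); tc_coords; injection H; lra.
  - intros (-> & -> & -> & ->); exists x1, x4, x5, x7; tc_coords; f_equal; ring.
Qed.

Lemma span4_one_j1_j2_j3_iff x :
  span4 one j1 j2 j3 x <-> t100 x = 0 /\ t010 x = 0 /\ t001 x = 0 /\ t111 x = 0.
Proof.
  tc_destruct x; split.
  - intros (a & b & d & e & H); tc_coords; injection H; lra.
  - intros (-> & -> & -> & ->); exists x0, x4, x5, x6; tc_coords; f_equal; ring.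
Qed.

Ltac rewrite_span4_iff :=
  rewrite ?span4_one_i1_i2_j1_iff, ?span4_i1_i2_j2_j3_iff,
          ?span4_i1_j1_j2_i4_iff, ?span4_one_j1_j2_j3_iff in *.

Ltac tc_solve := repeat split; first [ring | f_equal; ring].

Ltac intro_span4_coords :=
  intros x Hx; rewrite_span4_iff; tc_destruct x; destruct Hx as (-> & -> & -> & ->); tc_coords.

Lemma phi1_bij : conj_bij (span4 one i1 i2 j1) (span4 i1 i2 j2 j3) phi1.
Proof.
  apply conj_bij_of_inverse with phi1_inv; intro_span4_coords; tc_solve.
Qed.
Lemma phi2_bij : conj_bij (span4 one i1 i2 j1) (span4 i1 j1 j2 i4) phi2.
Proof.
  apply conj_bij_of_inverse with phi2_inv; intro_span4_coords; tc_solve.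
Qed.
Lemma phi3_bij : conj_bij (span4 one j1 j2 j3) (span4 one j1 j2 j3) phi3.
Proof.
  apply conj_bij_of_inverse with phi3_inv; intro_span4_coords; tc_solve.
Qed.

Lemma phi1_conjugates c1 c2 c3 :
  conjugates (span4 one i1 i2 j1) phi1
    (tadd (tadd (tscale c1 one) (tscale c2 i1)) (tscale c3 i2))
    (tadd (tadd (tscale c2 i1) (tscale c3 i2)) (tscale c1 j2)).
Proof. split; [tc_coords; tc_solve | intro_span4_coords; tc_solve]. Qed.

Lemma phi2_conjugates c1 c2 c3 :
  conjugates (span4 one i1 i2 j1) phi2
    (tadd (tadd (tscale c1 one) (tscale c2 i1)) (tscale c3 j1))
    (tadd (tadd (tscale c2 i1) (tscale c3 j1)) (tscale c1 j2)).
Proof. split; [tc_coords; tc_solve | intro_span4_coords; tc_solve]. Qed.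

Lemma phi3_conjugates c1 c2 c3 :
  conjugates (span4 one j1 j2 j3) phi3
    (tadd (tadd (tscale c1 one) (tscale c2 j1)) (tscale c3 j2))
    (tadd (tadd (tscale c1 j1) (tscale c2 j2)) (tscale c3 j3)).
Proof. split; [tc_coords; tc_solve | intro_span4_coords; tc_solve]. Qed.

Lemma tnorm_phi1 : forall x, span4 one i1 i2 j1 x -> tnorm (phi1 x) = tnorm x.
Proof. intro_span4_coords; rewrite !tnorm_mkTC; f_equal; ring. Qed.
Lemma tnorm_phi2 : forall x, span4 one i1 i2 j1 x -> tnorm (phi2 x) = tnorm x.
Proof. intro_span4_coords; rewrite !tnorm_mkTC; f_equal; ring. Qed.
Lemma tnorm_phi3 : forall x, span4 one j1 j2 j3 x -> tnorm (phi3 x) = tnorm x.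
Proof. intro_span4_coords; rewrite !tnorm_mkTC; f_equal; ring. Qed.

Lemma phi1_tzero : phi1 tzero = tzero. Proof. tc_coords; tc_solve. Qed.
Lemma phi2_tzero : phi2 tzero = tzero. Proof. tc_coords; tc_solve. Qed.
Lemma phi3_tzero : phi3 tzero = tzero. Proof. tc_coords; tc_solve. Qed.

Lemma phi1_T3 c' : T3 i1 i2 j2 c' <-> exists c, T3 one i1 i2 c /\ phi1 c = c'.
Proof.
  apply (T3_image _ _ (span4_tzero one i1 i2 j1) phi1_tzero tnorm_phi1).
  - intros c (a & b & d & ->); rewrite (proj1 (phi1_conjugates a b d)); apply phi1_conjugates.
  - clear c'; intros c'; split.
    + intros (a & b & d & ->); exists (tadd (tadd (tscale d one) (tscale a i1)) (tscale b i2)).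
      split; [exists d, a, b; reflexivity | exact (proj1 (phi1_conjugates d a b))].
    + intros (c & (a & b & d & ->) & <-); rewrite (proj1 (phi1_conjugates a b d)).
      exists b, d, a; reflexivity.
Qed.

Lemma phi2_T3 c' : T3 i1 j1 j2 c' <-> exists c, T3 one i1 j1 c /\ phi2 c = c'.
Proof.
  apply (T3_image _ _ (span4_tzero one i1 i2 j1) phi2_tzero tnorm_phi2).
  - intros c (a & b & d & ->); rewrite (proj1 (phi2_conjugates a b d)); apply phi2_conjugates.
  - clear c'; intros c'; split.
    + intros (a & b & d & ->); exists (tadd (tadd (tscale d one) (tscale a i1)) (tscale b j1)).
      split; [exists d, a, b; reflexivity | exact (proj1 (phi2_conjugates d a b))].
    + intros (c & (a & b & d & ->) & <-); rewrite (proj1 (phi2_conjugates a b d)).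
      exists b, d, a; reflexivity.
Qed.

Lemma phi3_T3 c' : T3 j1 j2 j3 c' <-> exists c, T3 one j1 j2 c /\ phi3 c = c'.
Proof.
  apply (T3_image _ _ (span4_tzero one j1 j2 j3) phi3_tzero tnorm_phi3).
  - intros c (a & b & d & ->); rewrite (proj1 (phi3_conjugates a b d)); apply phi3_conjugates.
  - clear c'; intros c'; split.
    + intros (a & b & d & ->); exists (tadd (tadd (tscale a one) (tscale b j1)) (tscale d j2)).
      split; [exists a, b, d; reflexivity | exact (proj1 (phi3_conjugates a b d))].
    + intros (c & (a & b & d & ->) & <-); rewrite (proj1 (phi3_conjugates a b d)).
      exists a, b, d; reflexivity.
Qed.

Theorem mainTheorem16 :
  (conj_bij (span4 one i1 i2 j1) (span4 i1 i2 j2 j3) phi1 /\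
   forall c1 c2 c3 : R,
     conjugates (span4 one i1 i2 j1) phi1
       (tadd (tadd (tscale c1 one) (tscale c2 i1)) (tscale c3 i2))
       (tadd (tadd (tscale c2 i1) (tscale c3 i2)) (tscale c1 j2))) /\
  (conj_bij (span4 one i1 i2 j1) (span4 i1 j1 j2 i4) phi2 /\
   forall c1 c2 c3 : R,
     conjugates (span4 one i1 i2 j1) phi2
       (tadd (tadd (tscale c1 one) (tscale c2 i1)) (tscale c3 j1))
       (tadd (tadd (tscale c2 i1) (tscale c3 j1)) (tscale c1 j2))) /\
  (conj_bij (span4 one j1 j2 j3) (span4 one j1 j2 j3) phi3 /\
   forall c1 c2 c3 : R,
     conjugates (span4 one j1 j2 j3) phi3
       (tadd (tadd (tscale c1 one) (tscale c2 j1)) (tscale c3 j2))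
       (tadd (tadd (tscale c1 j1) (tscale c2 j2)) (tscale c3 j3))) /\
  (forall c', T3 i1 i2 j2 c' <-> exists c, T3 one i1 i2 c /\ phi1 c = c') /\
  (forall c', T3 i1 j1 j2 c' <-> exists c, T3 one i1 j1 c /\ phi2 c = c') /\
  (forall c', T3 j1 j2 j3 c' <-> exists c, T3 one j1 j2 c /\ phi3 c = c').
Proof.
  split; [split; [exact phi1_bij | exact phi1_conjugates]|].
  split; [split; [exact phi2_bij | exact phi2_conjugates]|].
  split; [split; [exact phi3_bij | exact phi3_conjugates]|].
  split; [exact phi1_T3 | split; [exact phi2_T3 | exact phi3_T3]].
Qed.
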